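(* Let $T$ be a primed tableau, $1\le i\le k-1$, $j=i+1$, and suppose the $i$–$j$ reading subword of $T$ has an unbracketed $i$; let $x,E_x,S_x$ be as in the definition of $f_i$. (a) If $c(E_x)=j'$ (case F2, so $q=E_x$), then $c(S_q)>j$, where $S_q$ is the position directly below $q$. (b) If $c(E_x)\ge j$ and $c(S_x)\in\{j',j\}$ (case F3), then for every box of the ribbon defined in F3 that contains $j$, the box diagonally above and to the left of it contains $i$; and the Southwest-most box $q$ of this ribbon satisfies $c(q)=j'$.
   Context: Primed tableaux: Fix $k$. $X'_k=\{1'<1<2'<2<\dots<k'<k\}$; moving one step up in this chain is ''increasing by a half unit'' (e.g. $i'\to i$, $i\to (i+1)'$). A primed tableau of (skew) shape $\lambda/\mu$ is a filling of the diagram (English convention; ''below'' = next row down) with letters of $X'_k$, rows and columns weakly increasing, at most one $i'$ per row and at most one $i$ per column, for every $i$. For a position $p$, $c(p)$ is its entry, with $c(p)=\infty$ if $p$ is not a box of $T$. The reading word of $T$ is the word of its unprimed entries, read row by row left to right, from the bottom row to the top row. Bracketing: fix $i$, $j=i+1$. In the subword of the reading word consisting of the letters $i$ and $j$, repeatedly pair (bracket) a letter $j$ with a letter $i$ occurring later such that no unbracketed letters lie between them, until the unbracketed letters form a word $i^aj^b$. Operator $f_i$: if there is no unbracketed $i$, $f_i(T)=0$. Otherwise let $x$ be the box of $T$ corresponding to the rightmost unbracketed $i$; $E_x$ the position immediately right of $x$, $S_x$ the position immediately below $x$. Choose a box $q$: (F1) if $c(E_x)\ge j$ and $c(S_x)>j$,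 $q=x$; (F2) if $c(E_x)=j'$, $q=E_x$; (F3) if $c(E_x)\ge j$ and $c(S_x)\in\{j',j\}$, take the maximal ribbon (connected skew strip) starting at $S_x$ and extending by steps South and/or West consisting only of boxes with entries $j$ or $j'$, and let $q$ be its Southwest-most box. Then $f_i(T)$ is obtained from $T$ by increasing $c(x)$ by a half unit and then increasing $c(q)$ by a half unit (so if $q=x$ the entry of $x$ increases by a full unit). *)

From mathcomp Require Import all_boot.
Set Implicit Arguments. Unset Strict Implicit. Unset Printing Implicit Defensive.

(* Letters of X'_k are encoded as positive naturals:
     i' |-> 2i-1 ,  i |-> 2i   (i >= 1),
   so that the chain 1' < 1 < 2' < 2 < ... < k' < k becomes 1 < 2 < ... < 2k,
   "increasing by a half unit" is +1, and a letter is primed iff its code is odd. *)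
Definition unp (i : nat) : nat := i.*2.
Definition prm (i : nat) : nat := i.*2.-1.

(* Positions: (row, column), both 0-based, English convention
   (row r+1 is the row directly below row r, column c+1 is to the right). *)
Definition box := (nat * nat)%type.

(* A filling of a skew diagram lam/mu: lam, mu are partitions given as lists of
   row lengths (row 0 first), ent r c is the entry in row r, column c. *)
Record ptab := PTab { lam : seq nat; mu : seq nat; ent : nat -> nat -> nat }.

Definition in_shape (T : ptab) (p : box) : bool :=
  (nth 0 (mu T) p.1 <= p.2) && (p.2 < nth 0 (lam T) p.1).

Definition is_primed_tableau (k : nat) (T : ptab) : Prop :=
  [/\ sorted geq (lam T), sorted geq (mu T),
      (forall r, nth 0 (mu T) r <= nth 0 (lam T) r) &
      (forall p : box, in_shape T p -> 1 <= ent T p.1 p.2 <= k.*2)] /\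
  (
      (forall r c1 c2, in_shape T (r, c1) -> in_shape T (r, c2) -> c1 <= c2 ->
          ent T r c1 <= ent T r c2) /\
      (forall c r1 r2, in_shape T (r1, c) -> in_shape T (r2, c) -> r1 <= r2 ->
          ent T r1 c <= ent T r2 c)) /\
  ((* at most one i' per row *)
      (forall r c1 c2, in_shape T (r, c1) -> in_shape T (r, c2) -> c1 < c2 ->
          ent T r c1 = ent T r c2 -> ~~ odd (ent T r c1)) /\
      (* at most one i per column *)
      (forall c r1 r2, in_shape T (r1, c) -> in_shape T (r2, c) -> r1 < r2 ->
          ent T r1 c = ent T r2 c -> odd (ent T r1 c))).

(* c(p): Some (entry) if p is a box of T, None standing for infinity otherwise. *)
Definition cval (T : ptab) (p : box) : option nat :=
  if in_shape T p then Some (ent T p.1 p.2) else None.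

Definition geq_ext (o : option nat) (n : nat) : bool :=
  if o is Some v then n <= v else true.
Definition gt_ext (o : option nat) (n : nat) : bool :=
  if o is Some v then n < v else true.

Definition row_boxes (T : ptab) (r : nat) : seq box :=
  [seq (r, c) | c <- iota (nth 0 (mu T) r) (nth 0 (lam T) r - nth 0 (mu T) r)].

(* Reading word, as the sequence of the boxes carrying its letters:
   unprimed entries, rows bottom to top, each row left to right. *)
Definition reading_boxes (T : ptab) : seq box :=
  [seq p <- flatten [seq row_boxes T r | r <- rev (iota 0 (size (lam T)))]
     | ~~ odd (ent T p.1 p.2)].

Definition ij_boxes (T : ptab) (i : nat) : seq box :=
  [seq p <- reading_boxes T | (ent T p.1 p.2 == unp i) || (ent T p.1 p.2 == unp i.+1)].

(* Bracketing on a word w : seq bool over {i, j} (true = j, false = i),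
   with letters identified by their positions. A (partial) bracketing is a list
   of pairs (a, b) of positions: the letter j at a is bracketed with the i at b. *)
Definition bracketed (B : seq (nat * nat)) (p : nat) : bool :=
  has (fun ab => (ab.1 == p) || (ab.2 == p)) B.

Inductive brk_reach (w : seq bool) : seq (nat * nat) -> Prop :=
| brk_nil : brk_reach w [::]
| brk_step B a b :
    brk_reach w B -> a < b -> b < size w ->
    nth false w a -> ~~ nth false w b ->
    ~~ bracketed B a -> ~~ bracketed B b ->
    (forall m, a < m < b -> bracketed B m) ->
    brk_reach w ((a, b) :: B).

(* Termination: the unbracketed letters form a word i^a j^b. *)
Definition brk_final (w : seq bool) (B : seq (nat * nat)) : Prop :=
  forall a b, a < b -> b < size w -> nth false w a -> ~~ nth false w b ->
    bracketed B a || bracketed B b.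

Definition unbr_i (w : seq bool) (B : seq (nat * nat)) (p : nat) : bool :=
  [&& p < size w, ~~ nth false w p & ~~ bracketed B p].

Definition stepSW (a b : box) : bool :=
  (b == (a.1.+1, a.2)) || ((0 < a.2) && (b == (a.1, a.2.-1))).

Definition jbox (T : ptab) (j : nat) (p : box) : bool :=
  (cval T p == Some (prm j)) || (cval T p == Some (unp j)).

Definition max_ribbon (T : ptab) (j : nat) (s : box) (rest : seq box) : Prop :=
  [/\ all (jbox T j) (s :: rest), path stepSW s rest &
      forall b, stepSW (last s rest) b -> ~~ jbox T j b].

From mathcomp Require Import all_boot zify.
Set Implicit Arguments. Unset Strict Implicit. Unset Printing Implicit Defensive.

(* Let x be the rightmost unbracketed i. Every j read before x is bracketed
   with an i lying between it and x, so any stretch of the reading word that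
   ends just before x contains at least as many i's as j's. In both parts, if
   the claim failed, the shift (r, c) |-> (r+1, c+1) would map the i's of a
   suitable stretch injectively to j's of the same stretch while missing one j
   (the box below E_x in (a), a ribbon j without an i to its northwest in (b)),
   contradicting the count. Finally a j as last ribbon box would force a j or
   j' to its West, against maximality, so the ribbon ends with j'. *)

Section Bracketing.
Variable w : seq bool.

Lemma bracketed_cons B ab m : bracketed B m -> bracketed (ab :: B) m.
Proof. by rewrite /bracketed /= => ->; rewrite orbT. Qed.

Lemma brk_reach_pair B ab : brk_reach w B -> ab \in B ->
  [/\ ab.1 < ab.2, ab.2 < size w, nth false w ab.1 & ~~ nth false w ab.2].
Proof.
move=> HB; elim: HB ab => [|B' a b _ IH ltab ltbw wa wb _ _ _] ab //.
by rewrite inE => /orP [/eqP -> //|]; apply: IH.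
Qed.

Lemma brk_reach_inj_snd B ab cd : brk_reach w B -> ab \in B -> cd \in B ->
  ab.2 = cd.2 -> ab = cd.
Proof.
move=> HB; elim: HB ab cd => [|B' a b _ IH _ _ _ _ _ nb _] ab cd //.
rewrite !inE => /orP [/eqP ->|abB] /orP [/eqP ->|cdB] //= E.
- by case/negP: nb; apply/hasP; exists cd; rewrite //= E eqxx orbT.
- by case/negP: nb; apply/hasP; exists ab; rewrite //= -E eqxx orbT.
- exact: IH.
Qed.

Lemma brk_reach_between B ab m : brk_reach w B -> ab \in B ->
  ab.1 < m < ab.2 -> bracketed B m.
Proof.
move=> HB; elim: HB ab => [|B' a b _ IH _ _ _ _ _ _ Hab] ab //.
rewrite inE => /orP [/eqP -> /= Hm|abB Hm]; first by rewrite Hab // orbT.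
exact/bracketed_cons/(IH _ abB).
Qed.

Lemma count_j_le_count_i B n a : brk_reach w B -> brk_final w B -> unbr_i w B n ->
  count (fun m => (a <= m < n) && nth false w m) (iota 0 (size w)) <=
  count (fun m => (a <= m < n) && ~~ nth false w m) (iota 0 (size w)).
Proof.
move=> HB Hf /and3P [ltnw wn bn]; rewrite -!size_filter.
set J := filter _ _.
pose pair_of m := nth (0, 0) B (find (fun ab : nat * nat => ab.1 == m) B).
have pair_ofP m : m \in J -> pair_of m \in B /\ (pair_of m).1 = m.
  rewrite mem_filter mem_iota => /andP [/andP [/andP [am mn] wm] _].
  have := Hf m n mn ltnw wm wn; rewrite (negbTE bn) orbF => /hasP [ab abB].
  case/orP=> /eqP E; last by have [_ _ _] := brk_reach_pair HB abB; rewrite E wm.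
  have hasm : has (fun ab : nat * nat => ab.1 == m) B by apply/hasP; exists ab; rewrite ?E.
  by split; [rewrite mem_nth // -has_find | apply/eqP/(nth_find (0, 0) hasm)].
rewrite -(size_map (fun m => (pair_of m).2)); apply: uniq_leq_size.
  rewrite map_inj_in_uniq ?filter_uniq ?iota_uniq // => m1 m2 /pair_ofP [B1 E1].
  by case/pair_ofP=> [B2 E2] E; rewrite -E1 -E2 (brk_reach_inj_snd HB B1 B2 E).
move=> _ /mapP [m mJ ->]; have [pB pm] := pair_ofP m mJ.
have [lt12 ltw _ w2] := brk_reach_pair HB pB; rewrite pm in lt12.
move: mJ; rewrite mem_filter mem_iota => /andP [/andP [/andP [am mn] _] _].
rewrite mem_filter mem_iota w2 ltw andbT (leq_trans am (ltnW lt12)) /=.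
case: (ltngtP (pair_of m).2 n) => // [gtn|E].
  by case/negP: bn; apply: (brk_reach_between HB pB); rewrite pm mn.
by case/negP: bn; apply/hasP; exists (pair_of m); rewrite //= E eqxx orbT.
Qed.

End Bracketing.

Definition ebox (T : ptab) (p : box) : nat := ent T p.1 p.2.

Lemma odd_unp i : odd (unp i) = false.
Proof. by rewrite /unp odd_double. Qed.

Lemma prm_succ i : prm i.+1 = (unp i).+1.
Proof. by rewrite /prm /unp doubleS. Qed.

Lemma unp_succ i : unp i.+1 = (unp i).+2.
Proof. by rewrite /unp doubleS. Qed.

Lemma cvalP T p v : cval T p = Some v <-> in_shape T p /\ ebox T p = v.
Proof. by rewrite /cval /ebox; case: ifP => sp; split; [case=> <- | case=> _ -> | | case]. Qed.

Lemma jboxP T j p : jbox T j p -> in_shape T p /\ (ebox T p = prm j \/ ebox T p = unp j).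
Proof. by case/orP=> /eqP /cvalP [? ?]; split=> //; [left | right]. Qed.

Definition read_before (p q : box) : bool :=
  (q.1 < p.1) || ((p.1 == q.1) && (p.2 < q.2)).

Lemma read_before_trans : transitive read_before.
Proof.
move=> [a1 a2] [b1 b2] [c1 c2]; rewrite /read_before /=.
case/orP=> [h|/andP [/eqP -> h]]; case/orP=> [g|/andP [/eqP g g']];
  apply/orP; lia.
Qed.

Lemma read_before_irr : irreflexive read_before.
Proof. by move=> [a b]; rewrite /read_before /= !ltnn andbF. Qed.

Lemma pairwise_read_before_rows T rows : pairwise (fun r s : nat => s < r) rows ->
  pairwise read_before (flatten [seq row_boxes T r | r <- rows]).
Proof.
elim: rows => [|r rows IH] //= /andP [r_gt rows_dec].
rewrite pairwise_cat IH // andbT; apply/andP; split.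
  apply/allrelP => _ _ /mapP [c _ ->] /flattenP [_ /mapP [r' r'L ->] /mapP [c' _ ->]].
  by rewrite /read_before /= (allP r_gt _ r'L).
rewrite /row_boxes pairwise_map.
apply: (@sub_pairwise _ ltn); first by move=> a b ab; apply/orP; right; rewrite /= eqxx.
by rewrite -sorted_pairwise ?iota_ltn_sorted //; exact: ltn_trans.
Qed.

Lemma ij_boxes_read_before T i : pairwise read_before (ij_boxes T i).
Proof.
do 2!apply: pairwise_filter; apply: pairwise_read_before_rows.
rewrite -sorted_pairwise ?rev_sorted ?iota_ltn_sorted // => a b c ba cb.
exact: ltn_trans cb ba.
Qed.

Lemma mem_ij_boxes T i p : (p \in ij_boxes T i) =
  in_shape T p && ((ebox T p == unp i) || (ebox T p == unp i.+1)).
Proof.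
case: p => r c; rewrite /ij_boxes /reading_boxes !mem_filter /ebox /=.
case ij: (_ || _); rewrite ?andbF //= andbT.
have -> /= : ~~ odd (ent T r c) by case/orP: ij => /eqP ->; rewrite odd_unp.
apply/flattenP/idP => [[_ /mapP [r' _ ->] /mapP [c']]|].
  by rewrite mem_iota /in_shape => /andP [h1 h2] [-> ->] /=; lia.
rewrite /in_shape /= => /andP [h1 h2].
have rl : r < size (lam T) by rewrite ltnNge; apply: contraL h2 => /(nth_default 0) ->.
exists (row_boxes T r); first by apply/mapP; exists r; rewrite // mem_rev mem_iota.
by apply/mapP; exists c; rewrite // mem_iota h1 /=; lia.
Qed.

Definition read_between (b x p : box) : bool := ~~ read_before p b && read_before p x.

Section ReadingSegments.
Variables (T : ptab) (i : nat) (B : seq (nat * nat)) (n : nat).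
Let wb := ij_boxes T i.
Let w := [seq ent T p.1 p.2 == unp i.+1 | p <- wb].
Hypotheses (HB : brk_reach w B) (Hf : brk_final w B) (Hn : unbr_i w B n).
Let x := nth (0, 0) wb n.

Lemma unbr_i_lt_size : n < size wb.
Proof. by case/and3P: Hn; rewrite size_map. Qed.

Lemma read_between_index b m : m < size wb ->
  read_between b x (nth (0, 0) wb m) = (find (fun p => ~~ read_before p b) wb <= m < n).
Proof.
move=> ltm; have sorted_wb := pairwiseP (0, 0) (ij_boxes_read_before T i).
rewrite /read_between.
have -> : read_before (nth (0, 0) wb m) x = (m < n).
  case: (ltngtP m n) => [|gtn|->]; last by rewrite read_before_irr.
    exact: sorted_wb ltm unbr_i_lt_size.
  apply/negP => before; have := read_before_trans before (sorted_wb _ _ unbr_i_lt_size ltm gtn).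
  by rewrite read_before_irr.
congr (_ && _); set a := find _ _.
case: (ltnP m a) => [ltma|leam]; first by rewrite (before_find _ ltma).
have has_a : has (fun p => ~~ read_before p b) wb by rewrite has_find (leq_ltn_trans leam).
move: (nth_find (0, 0) has_a); rewrite -/a.
case: (ltngtP a m) leam => // [ltam _|-> _ //]; apply: contra => before.
exact: read_before_trans (sorted_wb _ _ (ltn_trans ltam ltm) ltm ltam) before.
Qed.

Lemma read_between_count_j_le_i b :
  count (fun p => read_between b x p && (ebox T p == unp i.+1)) wb <=
  count (fun p => read_between b x p && (ebox T p == unp i)) wb.
Proof.
have size_w : size w = size wb by rewrite size_map.
rewrite -[in X in X <= _](mkseq_nth (0, 0) wb) -[in X in _ <= X](mkseq_nth (0, 0) wb).
rewrite /mkseq !count_map -size_w.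
have := count_j_le_count_i (find (fun p => ~~ read_before p b) wb) HB Hf Hn.
have w_nth m : m < size wb -> nth false w m = (ebox T (nth (0, 0) wb m) == unp i.+1).
  by move=> ltm; rewrite (nth_map (0, 0)).
congr (_ <= _); apply: eq_in_count => m; rewrite mem_iota size_w => /= ltm.
  by rewrite read_between_index // w_nth.
rewrite read_between_index // w_nth //; congr (_ && _).
have := mem_nth (0, 0) ltm; rewrite mem_ij_boxes => /andP [_].
by rewrite /unp; case/orP=> /eqP ->; apply/idP/idP => /eqP ?; apply/eqP; lia.
Qed.

(* Both parts of the theorem reduce to this, with [f] the South-East shift. *)
Lemma read_between_no_spare_j (f : box -> box) b y : injective f ->
  y \in wb -> read_between b x y -> ebox T y = unp i.+1 ->
  (forall p, p \in wb -> read_between b x p -> ebox T p = unp i ->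
     [/\ f p \in wb, read_between b x (f p), ebox T (f p) = unp i.+1 & f p != y]) ->
  False.
Proof.
move=> injf yw yb yj Hf_ij; have := read_between_count_j_le_i b.
apply/negP; rewrite -ltnNge -!size_filter.
set I := filter _ wb.
have uniq_wb : uniq wb := pairwise_uniq read_before_irr (ij_boxes_read_before T i).
rewrite -(size_map f) -/(size (y :: map f I)); apply: uniq_leq_size.
  rewrite /= (map_inj_uniq injf) (filter_uniq _ uniq_wb) andbT.
  apply/mapP=> [[p]]; rewrite mem_filter => /andP [/andP [pb /eqP pi] pw] fpy.
  by have [_ _ _] := Hf_ij p pw pb pi; rewrite -fpy eqxx.
move=> z; rewrite inE => /orP [/eqP ->|/mapP [p]]; first by rewrite mem_filter yw yb yj eqxx.
rewrite mem_filter => /andP [/andP [pb /eqP pi] pw] ->.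
by have [fpw fpb fpj _] := Hf_ij p pw pb pi; rewrite mem_filter fpw fpb fpj eqxx.
Qed.

End ReadingSegments.

Lemma nth_sorted_geqS (s : seq nat) r : sorted geq s -> nth 0 s r.+1 <= nth 0 s r.
Proof.
elim: s r => [|a s IH] [|r] //= s_sorted; last exact/IH/(path_sorted s_sorted).
by case: s s_sorted {IH} => [|b s] //= /andP [].
Qed.

Section Tableau.
Variables (k : nat) (T : ptab).
Hypothesis HT : is_primed_tableau k T.

Lemma in_shape_below r c1 c2 c : in_shape T (r, c1) -> in_shape T (r.+1, c2) ->
  c1 <= c <= c2 -> in_shape T (r.+1, c).
Proof.
case: HT => [[_ mu_sorted _ _] _]; rewrite /in_shape /= => /andP [? ?] /andP [? ?] /andP [? ?].
by have := nth_sorted_geqS r mu_sorted; lia.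
Qed.

Lemma in_shape_row r c1 c2 c : in_shape T (r, c1) -> in_shape T (r, c2) ->
  c1 <= c <= c2 -> in_shape T (r, c).
Proof. by rewrite /in_shape /= => /andP [? ?] /andP [? ?] /andP [? ?]; lia. Qed.

Lemma tab_row_le r c1 c2 : in_shape T (r, c1) -> in_shape T (r, c2) -> c1 <= c2 ->
  ebox T (r, c1) <= ebox T (r, c2).
Proof. by case: HT => [_ [[row_le _] _]]; apply: row_le. Qed.

Lemma tab_col_le c r1 r2 : in_shape T (r1, c) -> in_shape T (r2, c) -> r1 <= r2 ->
  ebox T (r1, c) <= ebox T (r2, c).
Proof. by case: HT => [_ [[_ col_le] _]]; apply: col_le. Qed.

Lemma tab_row_eq_even r c1 c2 : in_shape T (r, c1) -> in_shape T (r, c2) -> c1 < c2 ->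
  ebox T (r, c1) = ebox T (r, c2) -> ~~ odd (ebox T (r, c1)).
Proof. by case: HT => [_ [_ [row_eq _]]]; apply: row_eq. Qed.

Lemma tab_col_eq_odd c r1 r2 : in_shape T (r1, c) -> in_shape T (r2, c) -> r1 < r2 ->
  ebox T (r1, c) = ebox T (r2, c) -> odd (ebox T (r1, c)).
Proof. by case: HT => [_ [_ [_ col_eq]]]; apply: col_eq. Qed.

Lemma tab_col_lt_even r c : in_shape T (r, c) -> in_shape T (r.+1, c) ->
  ~~ odd (ebox T (r, c)) -> ebox T (r, c) < ebox T (r.+1, c).
Proof.
move=> s1 s2 even_e; rewrite ltn_neqAle tab_col_le // andbT.
by apply: contra even_e => /eqP /(tab_col_eq_odd s1 s2 (ltnSn r)).
Qed.

(* Below an i the entry exceeds i, two j' cannot share a row, and the row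
   below is bounded by j further right: this forces a j to the southeast. *)
Lemma tab_southeast_j i r c t : in_shape T (r, c) -> ebox T (r, c) = unp i ->
  in_shape T (r.+1, t) -> c < t -> ebox T (r.+1, t) <= unp i.+1 ->
  in_shape T (r.+1, c.+1) /\ ebox T (r.+1, c.+1) = unp i.+1.
Proof.
move=> s_rc e_rc s_t ltct le_t.
have s_below : in_shape T (r.+1, c) by apply: in_shape_below s_rc s_t _; lia.
have s_se : in_shape T (r.+1, c.+1) by apply: in_shape_below s_rc s_t _; lia.
split=> //.
have gt_below := tab_col_lt_even s_rc s_below; rewrite e_rc odd_unp in gt_below.
have := gt_below isT; have := tab_row_le s_below s_se (leqnSn c).
have := tab_row_le s_se s_t ltct; rewrite unp_succ in le_t *.
have not_prm : ebox T (r.+1, c.+1) != (unp i).+1.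
  apply/eqP=> e_se; have e_eq : ebox T (r.+1, c) = ebox T (r.+1, c.+1).
    by apply/eqP; rewrite eqn_leq tab_row_le ?leqnSn //= e_se gt_below.
  by have := tab_row_eq_even s_below s_se (ltnSn c) e_eq; rewrite e_eq e_se /= odd_unp.
by move: not_prm; rewrite neq_ltn; case/orP; lia.
Qed.

Lemma tab_row_between_i i r c1 c2 c : in_shape T (r, c1) -> ebox T (r, c1) = unp i ->
  in_shape T (r, c2) -> ebox T (r, c2) <= (unp i).+1 -> c1 <= c < c2 ->
  cval T (r, c) = Some (unp i).
Proof.
move=> s1 e1 s2 le2 /andP [le_c lt_c]; have s_c : in_shape T (r, c).
  by apply: in_shape_row s1 s2 _; rewrite le_c ltnW.
apply/cvalP; split=> //; have := tab_row_le s1 s_c le_c; have := tab_row_le s_c s2 (ltnW lt_c).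
rewrite e1 => le_c2 ge_c; apply/eqP; rewrite eqn_leq ge_c andbT -ltnS ltn_neqAle.
rewrite (leq_trans le_c2 le2) andbT; apply/eqP => e_c.
have e_eq : ebox T (r, c) = ebox T (r, c2) by apply/eqP; rewrite eqn_leq le_c2 e_c.
by have := tab_row_eq_even s_c s2 lt_c e_eq; rewrite e_c /= odd_unp.
Qed.

Lemma tab_below_i_left_of_j i r c : in_shape T (r, c) -> ebox T (r, c) = unp i ->
  in_shape T (r.+1, c.+1) -> ebox T (r.+1, c.+1) = unp i.+1 -> jbox T i.+1 (r.+1, c).
Proof.
move=> s_nw e_nw s_e e_e; have s_w : in_shape T (r.+1, c) by apply: in_shape_below s_nw s_e _; lia.
have := tab_col_lt_even s_nw s_w; rewrite e_nw odd_unp => /(_ isT).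
have := tab_row_le s_w s_e (leqnSn c); rewrite e_e unp_succ.
rewrite /jbox /cval s_w prm_succ unp_succ -/(ebox T (r.+1, c)) /=.
by move: (ebox T (r.+1, c)) => e le_e gt_e; apply/orP; rewrite !(inj_eq (@Some_inj _)); lia.
Qed.

Lemma jbox_above_jbox j r c : jbox T j.+1 (r, c) -> jbox T j.+1 (r.+1, c) ->
  cval T (r, c) = Some (prm j.+1).
Proof.
move=> /jboxP [s1 [e1|e1]] /jboxP [s2 e2]; first exact/cvalP.
have := tab_col_le s1 s2 (leqnSn r); have := tab_col_eq_odd s1 s2 (ltnSn r).
rewrite e1 odd_unp; case: e2 => ->; rewrite ?prm_succ unp_succ; last by move=> /(_ erefl).
by rewrite ltnn.
Qed.

End Tableau.

Lemma path_stepSW_bounds (p0 : box) s b : path stepSW p0 s -> b \in p0 :: s ->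
  p0.1 <= b.1 /\ b.2 <= p0.2.
Proof.
elim: s p0 => [|y s IH] p0 /=; first by rewrite inE => _ /eqP ->.
case/andP=> step_y path_s; rewrite inE => /orP [/eqP -> //|bs].
have [] := IH y path_s bs; move: step_y; rewrite /stepSW.
by case/orP=> [/eqP -> /=|/andP [_ /eqP -> /=]]; lia.
Qed.

Lemma path_stepSW_descent (p0 : box) s b r : path stepSW p0 s -> b \in s ->
  p0.1 <= r < b.1 -> exists z, [/\ z \in p0 :: s, z.1 = r, (r.+1, z.2) \in s & b.2 <= z.2].
Proof.
elim: s p0 => [|y s IH] p0 //= /andP [step_y path_s]; rewrite inE => /orP [/eqP ->|bs] hr.
  move: step_y; rewrite /stepSW => /orP [/eqP E|/andP [_ /eqP E]]; rewrite E /= in hr *; last lia.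
  have -> : r = p0.1 by lia.
  by exists p0; rewrite !inE !eqxx.
have [h1 h2] := path_stepSW_bounds path_s (b := b) (mem_behead (s := y :: s) bs).
case: (leqP y.1 r) => hy.
  have [z [z_in z_row below_z z_east]] := IH y path_s bs (ltac:(by rewrite hy; case/andP: hr)).
  by exists z; split; rewrite // in_cons ?z_in ?below_z orbT.
move: step_y; rewrite /stepSW => /orP [/eqP E|/andP [_ /eqP E]];
  rewrite E /= in hy h1 h2 *; last lia.
have -> : r = p0.1 by lia.
by exists p0; rewrite !inE !eqxx; split=> //; lia.
Qed.

Definition southeast (p : box) : box := (p.1.+1, p.2.+1).

Definition northwest_is (T : ptab) (v : nat) (b : box) : bool :=
  [&& 0 < b.1, 0 < b.2 & cval T (b.1.-1, b.2.-1) == Some v].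

Lemma southeast_inj : injective southeast.
Proof. by move=> [a1 a2] [b1 b2] [-> ->]. Qed.

Section RightmostUnbracketed.
Variables (k : nat) (T : ptab) (i : nat) (B : seq (nat * nat)) (n : nat).
Hypothesis HT : is_primed_tableau k T.
Let wb := ij_boxes T i.
Let w := [seq ent T p.1 p.2 == unp i.+1 | p <- wb].
Hypotheses (HB : brk_reach w B) (Hf : brk_final w B) (Hn : unbr_i w B n).
Let x := nth (0, 0) wb n.

Lemma rightmost_unbr_i_box : in_shape T x /\ ebox T x = unp i.
Proof.
have lt_n := unbr_i_lt_size Hn; have := mem_nth (0, 0) lt_n.
rewrite mem_ij_boxes => /andP [xs /orP [/eqP //|/eqP xj]].
by case/and3P: Hn => _; rewrite (nth_map (0, 0)) // -/x -/(ebox T x) xj eqxx.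
Qed.

Lemma southeast_gt_j : gt_ext (cval T (southeast x)) (unp i.+1).
Proof.
have [xs xi] := rightmost_unbr_i_box.
rewrite /cval; case: ifP => //= se_s; rewrite ltnNge; apply/negP => le_se.
have [_ se_j] := tab_southeast_j HT xs xi se_s (ltnSn _) le_se.
pose row_i c := in_shape T (x.1, c) && (ebox T (x.1, c) == unp i).
have row_x : row_i x.2 by rewrite /row_i -surjective_pairing xs xi eqxx.
have [a /andP [a_s /eqP a_i] a_min] := ex_minnP (ex_intro row_i _ row_x).
apply: (read_between_no_spare_j HB Hf Hn southeast_inj (b := (x.1.+1, a)) (y := southeast x)).
- by rewrite mem_ij_boxes se_s se_j eqxx orbT.
- rewrite /read_between /read_before /southeast /= ltnn eqxx ltnSn andbT -leqNgt.
  exact: leq_trans (a_min _ row_x) (leqnSn _).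
- exact: se_j.
move=> [r c]; rewrite mem_ij_boxes /read_between /read_before /= => /andP [rc_s _] rc_seg rc_i.
have : (r = x.1.+1 /\ a <= c) \/ (r = x.1 /\ c < x.2).
  by move: rc_seg; rewrite -/x => /andP [/norP [? /nandP ?] /orP [?|/andP [/eqP ? ?]]]; lia.
case=> [[r_eq a_le_c]|[r_eq lt_c]]; subst r.
- have below_a : in_shape T (x.1.+1, a) by apply: (in_shape_below HT a_s rc_s); lia.
  have := tab_col_lt_even HT a_s below_a; rewrite a_i odd_unp => /(_ isT).
  by have := tab_row_le HT below_a rc_s a_le_c; rewrite rc_i; lia.
have a_le_c : a <= c by apply: a_min; rewrite /row_i rc_s rc_i eqxx.
have [se_rc_s se_rc_j] := tab_southeast_j HT rc_s rc_i se_s (leqW lt_c) le_se.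
rewrite /southeast /= mem_ij_boxes se_rc_s se_rc_j eqxx orbT /read_between /read_before /=.
rewrite -/x !ltnn eqxx ltnSn /= -leqNgt (leqW a_le_c); split=> //.
by apply/eqP => -[]; lia.
Qed.

Let Sx : box := (x.1.+1, x.2).
Variable rest : seq box.
Hypotheses (ribbon_j : all (jbox T i.+1) (Sx :: rest)) (ribbon_path : path stepSW Sx rest).

Lemma path_from_x : path stepSW x (Sx :: rest).
Proof. by rewrite /= ribbon_path /stepSW eqxx. Qed.

Lemma ribbon_descent_box z : z \in x :: Sx :: rest -> (z.1.+1, z.2) \in Sx :: rest ->
  in_shape T z /\ (z = x \/ ebox T z = prm i.+1).
Proof.
rewrite in_cons => /orP [/eqP ->|zR] belowR.
  by have [xs _] := rightmost_unbr_i_box; split=> //; left.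
have /cvalP [] := jbox_above_jbox HT (allP ribbon_j _ zR) (allP ribbon_j _ belowR).
by rewrite -surjective_pairing => ? ?; split=> //; right.
Qed.

Section RibbonJBox.
Variable b : box.
Hypotheses (bR : b \in Sx :: rest) (b_j : cval T b = Some (unp i.+1)).
Hypothesis not_nw_i : ~~ northwest_is T (unp i) b.

Lemma read_between_ribbon_i_row p : p \in wb -> read_between b x p -> ebox T p = unp i ->
  x.1 <= p.1 < b.1.
Proof.
move: b_j => /cvalP [b_s b_e]; case: p => r c.
rewrite mem_ij_boxes /read_between /read_before /= => /andP [p_s _] p_seg p_i.
have [r_eq|r_ne] := eqVneq r b.1; last by lia.
rewrite r_eq in p_s p_i p_seg; have b2_le : b.2 <= c by lia.
have := tab_row_le HT (c1 := b.2) _ p_s b2_le; rewrite -surjective_pairing => /(_ b_s).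
by rewrite [ebox T (b.1, c)]p_i b_e unp_succ; lia.
Qed.

Lemma ribbon_i_southeast p : p \in wb -> read_between b x p -> ebox T p = unp i ->
  [/\ southeast p \in wb, read_between b x (southeast p),
      ebox T (southeast p) = unp i.+1 & southeast p != b].
Proof.
case: p => r c pw p_seg p_i; have p_row := read_between_ribbon_i_row pw p_seg p_i.
have [[z1 z2] [zR /= z_row belowR b2_le]] := path_stepSW_descent path_from_x bR p_row.
subst z1; have [z_s z_x_or_prm] := ribbon_descent_box zR belowR.
have [below_s below_e] := jboxP (allP ribbon_j _ belowR).
have p_s : in_shape T (r, c) by move: pw; rewrite mem_ij_boxes => /andP [].
have lt_cz : c < z2.
  case: z_x_or_prm => [z_x|z_prm].
    by move: p_seg; rewrite -/x -z_x /read_between /read_before /= ltnn eqxx /=; case/andP.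
  rewrite ltnNge; apply/negP => le_zc; have := tab_row_le HT z_s p_s le_zc.
  by rewrite z_prm p_i prm_succ ltnn.
have le_z : ebox T (r, z2) <= (unp i).+1.
  by case: z_x_or_prm => [->|->]; [have [_ ->] := rightmost_unbr_i_box | rewrite prm_succ].
have le_below : ebox T (r.+1, z2) <= unp i.+1.
  by case: below_e => ->; rewrite ?prm_succ unp_succ.
have [se_s se_j] := tab_southeast_j HT p_s p_i below_s lt_cz le_below.
have nw_of_b : r.+1 = b.1 -> c < b.2 -> False.
  move=> r_b c_b; have b2_pos : 0 < b.2 := leq_ltn_trans (leq0n c) c_b.
  case/negP: not_nw_i; rewrite /northwest_is -r_b b2_pos /=.
  apply/eqP/(tab_row_between_i HT p_s p_i z_s le_z).
  by rewrite -ltnS prednK // c_b (leq_trans _ b2_le) // ltn_predL.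
split=> //; first by rewrite mem_ij_boxes se_s se_j eqxx orbT.
  rewrite /read_between /read_before /southeast /= -/x; case/andP: p_row => x_r r_b.
  have [r_eq|r_ne] := eqVneq r.+1 b.1; last by rewrite !ltnS x_r andFb orbF -ltnNge r_b.
  have c_b : b.2 <= c.+1 by rewrite leqNgt; apply/negP => /ltnW; apply: nw_of_b.
  by rewrite -r_eq ltnn /= -leqNgt c_b ltnS x_r.
by apply/eqP => se_b; apply: nw_of_b; rewrite -se_b.
Qed.

End RibbonJBox.

Lemma ribbon_j_northwest_i b : b \in Sx :: rest -> cval T b = Some (unp i.+1) ->
  northwest_is T (unp i) b.
Proof.
move=> bR b_j; apply/negPn/negP => not_nw; have /cvalP [b_s b_e] := b_j.
apply: (read_between_no_spare_j HB Hf Hn southeast_inj (b := b) (y := b)) => //.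
- by rewrite mem_ij_boxes b_s b_e eqxx orbT.
- have [x_b _] := path_stepSW_bounds ribbon_path bR.
  by rewrite /read_between read_before_irr /read_before -/x x_b.
exact: ribbon_i_southeast.
Qed.

Lemma ribbon_last_prm : (forall b, stepSW (last Sx rest) b -> ~~ jbox T i.+1 b) ->
  cval T (last Sx rest) = Some (prm i.+1).
Proof.
move=> maximal; set q := last Sx rest; have qR : q \in Sx :: rest := mem_last _ _.
have [q_s [q_prm|q_j]] := jboxP (allP ribbon_j _ qR); first exact/cvalP.
have /and3P [q1 q2 /eqP /cvalP [nw_s nw_e]] := ribbon_j_northwest_i qR (ltac:(exact/cvalP)).
case/negP: (maximal (q.1, q.2.-1) (ltac:(by rewrite /stepSW q2 eqxx orbT))).
move: q1 q2 nw_s nw_e q_s q_j; case: q {qR} => [[|r] [|c]] //= _ _.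
exact: (tab_below_i_left_of_j HT).
Qed.

End RightmostUnbracketed.

Theorem lemma3p1 (k : nat) (T : ptab) (i : nat) (B : seq (nat * nat)) (n : nat) :
  is_primed_tableau k T -> 1 <= i -> i <= k.-1 ->
  let j := i.+1 in
  let wb := ij_boxes T i in
  let w := [seq ent T p.1 p.2 == unp j | p <- wb] in
  brk_reach w B -> brk_final w B ->
  (* n is the position of the rightmost unbracketed i *)
  unbr_i w B n -> (forall m, unbr_i w B m -> m <= n) ->
  let x := nth (0, 0) wb n in
  let Ex := (x.1, x.2.+1) in
  let Sx := (x.1.+1, x.2) in
  (* (a) case F2, q = E_x *)
  (cval T Ex = Some (prm j) -> gt_ext (cval T (Ex.1.+1, Ex.2)) (unp j)) /\
  (* (b) case F3 *)
  (geq_ext (cval T Ex) (unp j) ->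
   (cval T Sx = Some (prm j) \/ cval T Sx = Some (unp j)) ->
   forall rest, max_ribbon T j Sx rest ->
     (forall b, b \in Sx :: rest -> cval T b = Some (unp j) ->
        [/\ 0 < b.1, 0 < b.2 & cval T (b.1.-1, b.2.-1) = Some (unp i)]) /\
     cval T (last Sx rest) = Some (prm j)).
Proof.
move=> HT _ _ j wb w HB Hf Hn _ x Ex Sx; split.
  by move=> _; apply: southeast_gt_j HT HB Hf Hn.
move=> _ _ rest [ribbon_j ribbon_path maximal]; split.
  move=> b bR b_j.
  by have /and3P [? ? /eqP ?] := ribbon_j_northwest_i HT HB Hf Hn ribbon_j ribbon_path bR b_j.
exact: (ribbon_last_prm HT HB Hf Hn ribbon_j ribbon_path maximal).
Qed.
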